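(* Let $\alpha\in(0,1)$. For all density operators $\varrho,\sigma$ on a finite-dimensional Hilbert space, $\overline{D}_\alpha^{\mathrm{test}}(\varrho\|\sigma)\ge0$, with equality if and only if $\varrho=\sigma$.
   Context: For probability vectors $p,q$ and $\alpha\in(0,1)$, $D_\alpha(p\|q)=\frac{1}{\alpha-1}\log\sum_xp(x)^\alpha q(x)^{1-\alpha}$. A test is an operator $0\le T\le I$; $\mathcal T(X):=(\operatorname{Tr}XT,\operatorname{Tr}X(I-T))$; $D_\alpha^{\mathrm{test}}(\varrho\|\sigma):=\max_{0\le T\le I}D_\alpha(\mathcal T(\varrho)\|\mathcal T(\sigma))$; $\overline{D}_\alpha^{\mathrm{test}}(\varrho\|\sigma):=\limsup_n\frac1nD_\alpha^{\mathrm{test}}(\varrho^{\otimes n}\|\sigma^{\otimes n})$. *)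

From HB Require Import structures.
From mathcomp Require Import all_boot all_order all_algebra.
From mathcomp Require Import sesquilinear.
From mathcomp Require Import all_classical all_reals all_analysis.
From mathcomp Require Import complex mxtens.

Set Implicit Arguments.
Unset Strict Implicit.
Unset Printing Implicit Defensive.

Import Order.TTheory GRing.Theory Num.Theory.
Local Open Scope ring_scope.
Local Open Scope classical_set_scope.

Definition psdmx (R : realType) (n : nat) (A : 'M[R[i]]_n) : Prop :=
  A \is hermsymmx /\
  forall v : 'rV[R[i]]_n, 0 <= (v *m A *m (map_mx Num.conj v)^T) 0 0.

Definition density (R : realType) (n : nat) (A : 'M[R[i]]_n) : Prop :=
  psdmx A /\ \tr A = 1.

Definition is_test (R : realType) (n : nat) (T : 'M[R[i]]_n) : Prop :=
  psdmx T /\ psdmx (1%:M - T).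

(* Classical alpha-Renyi divergence of probability vectors indexed by a
   finite type, with values in the extended reals:
   D_alpha(p||q) = 1/(alpha-1) log sum_x p(x)^alpha q(x)^(1-alpha),
   with 0^a = 0 for a > 0 and log 0 = -oo, so an empty overlap
   (sum = 0) gives +oo since alpha - 1 < 0. *)
Definition renyi_div (R : realType) (alpha : R) (I : finType) (p q : I -> R)
  : \bar R :=
  let s := \sum_(x : I) (p x `^ alpha) * (q x `^ (1 - alpha)) in
  if s == 0 then +oo%E else (((alpha - 1)^-1) * ln s)%:E.

(* Measurement channel of a test: X |-> (Tr X T, Tr X (I - T)).
   Tr X T is real for Hermitian X, T; we take its real part. *)
Definition test_channel (R : realType) (n : nat) (T X : 'M[R[i]]_n)
  : bool -> R :=
  fun b => if b then complex.Re (\tr (X *m T))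
           else complex.Re (\tr (X *m (1%:M - T))).

(* D^test_alpha(rho||sigma) = max over tests (a sup, attained). *)
Definition D_test (R : realType) (alpha : R) (n : nat) (rho sigma : 'M[R[i]]_n)
  : \bar R :=
  ereal_sup [set renyi_div alpha (test_channel T rho) (test_channel T sigma)
            | T in [set T : 'M[R[i]]_n | is_test T]].

Definition D_test_bar (R : realType) (alpha : R) (n : nat)
  (rho sigma : 'M[R[i]]_n) : \bar R :=
  limn_esup (fun k : nat =>
    ((k%:R : R)^-1)%:E * D_test alpha (ntensmx rho k) (ntensmx sigma k))%E.

From HB Require Import structures.
From mathcomp Require Import all_boot all_order all_algebra.
From mathcomp Require Import sesquilinear spectral.
From mathcomp Require Import all_classical all_reals all_analysis.
From mathcomp Require Import complex mxtens.
From mathcomp Require Import ring lra.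

(* Nonnegativity: the trivial test T = 0 turns both states into the binary
   distribution (0, 1).  If rho = sigma, every test turns both into the same
   distribution p, and x <= x^a x^(1-a) makes its overlap
   sum_t p(t)^a p(t)^(1-a) at least 1, so the divergence is at most 0.
   If rho <> sigma, the diagonals p, q of rho and sigma in an eigenbasis of
   rho - sigma differ, so by the strict weighted AM-GM inequality their
   overlap F = sum_x p(x)^a q(x)^(1-a) is < 1.  For k copies, measure in the
   product basis and keep the outcomes x with Q(x) <= P(x), where P, Q are
   the product distributions: since min(P x, Q x) <= P(x)^a Q(x)^(1-a), both
   error masses are at most F^k, so the binary overlap is at most
   2 F^(k min(a, 1-a)).  Hence the test divergence of the k-th tensor powers
   grows linearly in k, and its regularization is positive. *)

Set Implicit Arguments.
Unset Strict Implicit.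
Unset Printing Implicit Defensive.

Import Order.TTheory GRing.Theory Num.Theory.
Local Open Scope ring_scope.
Local Open Scope classical_set_scope.

Section PowRInequalities.
Variable R : realType.
Implicit Types a x y z u r : R.

Lemma powR_mul_compl a x : 0 <= x -> x `^ a * x `^ (1 - a) = x.
Proof.
move=> x0; rewrite -powRD; last by rewrite addrC subrK oner_eq0.
by rewrite addrC subrK powRr1.
Qed.

Lemma ler_powR_mul_compl a x : x <= x `^ a * x `^ (1 - a).
Proof.
have [x0|x0] := leP 0 x; first by rewrite powR_mul_compl.
by rewrite !lt0_powR1 // mulr1 ltW // (lt_le_trans x0).
Qed.

Lemma powR_le1 x r : 0 <= r -> 0 <= x <= 1 -> x `^ r <= 1.
Proof.
move=> r0 /andP[x0 x1].
by have := ge0_ler_powR r0 x0 ler01 x1; rewrite powR1.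
Qed.

Lemma powR_lt1 x r : 0 < r -> 0 <= x < 1 -> x `^ r < 1.
Proof.
move=> r0 /andP[x0 x1].
by have := gt0_ltr_powR r0 x0 ler01 x1; rewrite powR1.
Qed.

Lemma powR_exprn x n r : 0 <= x -> (x ^+ n) `^ r = (x `^ r) ^+ n.
Proof. by move=> x0; rewrite -powR_mulrn // powRAC powR_mulrn ?powR_ge0. Qed.

Lemma ler_expR_tangent z u : expR z * (1 + (u - z)) <= expR u.
Proof.
have -> : expR u = expR z * expR (u - z) by rewrite -expRD addrC subrK.
by rewrite ler_pM2l ?expR_gt0 // expR_ge1Dx.
Qed.

Lemma ltr_expR_tangent z u : u != z -> expR z * (1 + (u - z)) < expR u.
Proof.
move=> uz; have -> : expR u = expR z * expR (u - z) by rewrite -expRD addrC subrK.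
by rewrite ltr_pM2l ?expR_gt0 // expR_gt1Dx // subr_eq0.
Qed.

Lemma ltr_powR_wmean a x y : 0 < a < 1 -> 0 <= x -> 0 <= y -> x != y ->
  x `^ a * y `^ (1 - a) < a * x + (1 - a) * y.
Proof.
move=> /andP[a0 a1] x0 y0 xy; have b0 : 0 < 1 - a by rewrite subr_gt0.
have [x_eq0|xn0] := eqVneq x 0.
  rewrite x_eq0 powR0 ?gt_eqF // mul0r mulr0 add0r mulr_gt0 // lt0r y0 andbT.
  by rewrite eq_sym -x_eq0.
have [y_eq0|yn0] := eqVneq y 0.
  by rewrite y_eq0 [0 `^ _]powR0 ?gt_eqF // !mulr0 addr0 mulr_gt0 // lt0r x0 andbT.
have xp : 0 < x by rewrite lt0r xn0.
have yp : 0 < y by rewrite lt0r yn0.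
rewrite /powR (negbTE xn0) (negbTE yn0) -expRD.
rewrite -[in X in _ < X](lnK xp) -[in X in _ < X](lnK yp).
set u := ln x; set v := ln y; set z := a * u + (1 - a) * v.
have uv : u != v by apply: contra xy => /eqP uv; apply/eqP/ln_inj; rewrite ?posrE.
have uz : u != z.
  apply: contra uv => /eqP uz.
  have : (1 - a) * (u - v) = u - z by rewrite /z; ring.
  by rewrite -uz subrr => /eqP; rewrite mulf_eq0 gt_eqF //= subr_eq0.
(* Average the tangent-line bounds of [expR] at [z] evaluated at [u] and [v]. *)
have -> : expR z = a * (expR z * (1 + (u - z))) + (1 - a) * (expR z * (1 + (v - z))).
  by rewrite /z; ring.
apply: ltr_leD; first by rewrite ltr_pM2l // ltr_expR_tangent.
by rewrite ler_wpM2l ?(ltW b0) // ler_expR_tangent.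
Qed.

Lemma ler_powR_wmean a x y : 0 < a < 1 -> 0 <= x -> 0 <= y ->
  x `^ a * y `^ (1 - a) <= a * x + (1 - a) * y.
Proof.
move=> a01 x0 y0; have [<-|xy] := eqVneq x y; last exact/ltW/ltr_powR_wmean.
by rewrite powR_mul_compl // -mulrDl addrC subrK mul1r.
Qed.

End PowRInequalities.

Section RenyiOverlap.
Variable R : realType.
Implicit Types a s t : R.

Definition renyi_overlap a (I : finType) (p q : I -> R) : R :=
  \sum_x p x `^ a * q x `^ (1 - a).

Definition renyi_of_overlap a s : \bar R :=
  if s == 0 then +oo%E else ((a - 1)^-1 * ln s)%:E.

Lemma renyi_divE a (I : finType) (p q : I -> R) :
  renyi_div a p q = renyi_of_overlap a (renyi_overlap a p q).
Proof. by []. Qed.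

Lemma renyi_overlap_ge0 a (I : finType) (p q : I -> R) :
  0 <= renyi_overlap a p q.
Proof. by apply: sumr_ge0 => x _; rewrite mulr_ge0 ?powR_ge0. Qed.

Lemma renyi_of_overlap1 a : renyi_of_overlap a 1 = 0%E.
Proof. by rewrite /renyi_of_overlap oner_eq0 ln1 mulr0. Qed.

Lemma renyi_of_overlap_le a s t : a < 1 -> 0 <= s <= t ->
  (renyi_of_overlap a t <= renyi_of_overlap a s)%E.
Proof.
move=> a1 /andP[s0 st]; rewrite /renyi_of_overlap.
have [_|sn0] := eqVneq s 0; first by rewrite leey.
have sp : 0 < s by rewrite lt0r sn0.
have tp : 0 < t := lt_le_trans sp st.
rewrite gt_eqF // lee_fin ler_nM2l ?invr_lt0 ?subr_lt0 //.
by rewrite ler_ln ?posrE.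
Qed.

Lemma renyi_overlap_self_ge1 a (I : finType) (p : I -> R) :
  \sum_x p x = 1 -> 1 <= renyi_overlap a p p.
Proof.
move=> p1; rewrite -[X in X <= _]p1.
by apply: ler_sum => x _; exact: ler_powR_mul_compl.
Qed.

Section ProbabilityVectors.
Variables (I : finType) (p q : I -> R).
Hypotheses (p_ge0 : forall i, 0 <= p i) (q_ge0 : forall i, 0 <= q i).
Hypotheses (p_sum1 : \sum_i p i = 1) (q_sum1 : \sum_i q i = 1).

Let sum_wmean a : \sum_i (a * p i + (1 - a) * q i) = 1.
Proof. by rewrite big_split /= -!mulr_sumr p_sum1 q_sum1 !mulr1 addrC subrK. Qed.

Lemma renyi_overlap_le1 a : 0 < a < 1 -> renyi_overlap a p q <= 1.
Proof.
move=> a01; rewrite -(sum_wmean a).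
by apply: ler_sum => i _; exact: ler_powR_wmean.
Qed.

Lemma renyi_overlap_lt1 a j : 0 < a < 1 -> p j != q j -> renyi_overlap a p q < 1.
Proof.
move=> a01 pq; rewrite -(sum_wmean a) /renyi_overlap (bigD1 j) //.
rewrite [X in _ < X](bigD1 j) //=; apply: ltr_leD; first exact: ltr_powR_wmean.
by apply: ler_sum => i _; exact: ler_powR_wmean.
Qed.

Lemma sum_minr_le_renyi_overlap a : 0 <= a <= 1 ->
  \sum_i Num.min (p i) (q i) <= renyi_overlap a p q.
Proof.
move=> /andP[a0 a1]; apply: ler_sum => i _.
have m0 : 0 <= Num.min (p i) (q i) by rewrite le_min p_ge0 q_ge0.
rewrite -[X in X <= _](powR_mul_compl a m0).
apply: ler_pM; rewrite ?powR_ge0 //; apply: ge0_ler_powR;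
  by rewrite ?nnegrE ?subr_ge0 ?ge_min ?lexx ?orbT.
Qed.

Definition coarse_grain (b : pred I) (f : I -> R) (t : bool) : R :=
  \sum_(x | b x == t) f x.

(* On the event [q <= p] we have [min p q = q], off it [min p q = p], so both
   error masses are bounded by the overlap. *)
Lemma renyi_overlap_threshold_le a : 0 < a < 1 ->
  renyi_overlap a (coarse_grain [pred x | q x <= p x] p)
                  (coarse_grain [pred x | q x <= p x] q)
    <= 2 * renyi_overlap a p q `^ Num.min a (1 - a).
Proof.
move=> a01; have /andP[a0 a1] := a01.
set b := [pred x | q x <= p x]; set G := renyi_overlap a p q.
set m := Num.min a (1 - a); have m0 : 0 < m by rewrite lt_min a0 subr_gt0.
have cg_ge0 f (t : bool) : (forall i, 0 <= f i) -> 0 <= coarse_grain b f t.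
  by move=> f0; apply: sumr_ge0.
have cg_le1 f (t : bool) :
    (forall i, 0 <= f i) -> \sum_i f i = 1 -> coarse_grain b f t <= 1.
  move=> f0 <-; rewrite [X in _ <= X](bigID (fun x => b x == t)) /= lerDl.
  exact: sumr_ge0.
have minE : \sum_i Num.min (p i) (q i) = coarse_grain b q true + coarse_grain b p false.
  rewrite (bigID b) /=; congr (_ + _); apply: eq_big => x; rewrite ?eqb_id ?eqbF_neg //.
    by move=> qp; rewrite min_r.
  by rewrite -ltNge => pq; rewrite min_l // ltW.
have minG : \sum_i Num.min (p i) (q i) <= G.
  by apply: sum_minr_le_renyi_overlap; rewrite !ltW.
have qG : coarse_grain b q true <= G.
  by apply: le_trans minG; rewrite minE lerDl cg_ge0.
have pG : coarse_grain b p false <= G.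
  by apply: le_trans minG; rewrite minE lerDr cg_ge0.
have G01 : 0 <= G <= 1 by rewrite renyi_overlap_ge0 renyi_overlap_le1.
have powG e : 0 < e -> m <= e -> G `^ e <= G `^ m.
  move=> e0 me; have [->|Gn0] := eqVneq G 0; first by rewrite !powR0 ?gt_eqF.
  by apply: ger_powR; rewrite // lt0r Gn0.
have powGle f e : 0 < e -> m <= e -> f <= G -> 0 <= f -> f `^ e <= G `^ m.
  move=> e0 me fG f0; apply: le_trans (powG e e0 me).
  by rewrite ge0_ler_powR ?nnegrE ?(ltW e0) ?(le_trans f0 fG).
rewrite /renyi_overlap big_bool mulr_natl mulr2n.
apply: lerD.
  apply: le_trans (ler_piMl _ _) _;
    rewrite ?powR_ge0 ?powR_le1 ?cg_ge0 ?cg_le1 ?(ltW a0) //.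
  by apply: powGle; rewrite ?cg_ge0 ?subr_gt0 ?ge_min ?lexx ?orbT.
apply: le_trans (ler_piMr _ _) _;
  rewrite ?powR_ge0 ?powR_le1 ?cg_ge0 ?cg_le1 ?subr_ge0 ?(ltW a1) //.
by apply: powGle; rewrite ?cg_ge0 ?ge_min ?lexx.
Qed.

End ProbabilityVectors.

Lemma renyi_of_overlap_geometric a r : 0 < a < 1 -> 0 <= r < 1 ->
  exists2 c : R, 0 < c &
    \forall k \near \oo, ((c * k%:R)%:E <= renyi_of_overlap a (2 * r ^+ k))%E.
Proof.
move=> /andP[a0 a1] /andP[r0 r1].
have [->|rn0] := eqVneq r 0.
  exists 1 => //; near=> k.
  rewrite expr0n gtn_eqF ?mulr0 /renyi_of_overlap ?eqxx ?leey //.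
  by near: k; exact: nbhs_infty_gt.
have rp : 0 < r by rewrite lt0r rn0.
set L := - ln r; have L0 : 0 < L by rewrite oppr_gt0 ln_lt0 // rp.
exists ((1 - a)^-1 * (L / 2)); first by rewrite mulr_gt0 ?invr_gt0 ?subr_gt0 ?divr_gt0.
near=> k.
have kL : 2 * ln 2 <= k%:R * L.
  by rewrite -ler_pdivrMr //; near: k; exact: nbhs_infty_ger.
have sp : 0 < 2 * r ^+ k by rewrite mulr_gt0 ?exprn_gt0.
rewrite /renyi_of_overlap gt_eqF // lee_fin lnM ?posrE ?exprn_gt0 // lnXn //.
have -> : (a - 1)^-1 * (ln 2 + ln r *+ k) = (1 - a)^-1 * (k%:R * L - ln 2).
  by rewrite /L -(opprB 1 a) invrN -mulr_natl; ring.
rewrite -mulrA ler_pM2l ?invr_gt0 ?subr_gt0 //; lra.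
Unshelve. all: by end_near. Qed.

End RenyiOverlap.

(* [ntensf f k] is the [k.+1]-fold tensor power of [f], indexed like the
   diagonal of [ntensmx A k.+1]. *)
Fixpoint ntensf (S : pzRingType) n (f : 'I_n -> S) k : 'I_(n ^ k.+1) -> S :=
  if k is k'.+1 return 'I_(n ^ k.+1) -> S
  then fun x => f (mxtens_unindex x).1 * @ntensf S n f k' (mxtens_unindex x).2
  else f.
Arguments ntensf {S n} f k.

Lemma sum_ntensf (S : pzRingType) n (f : 'I_n -> S) k :
  \sum_x ntensf f k x = (\sum_i f i) ^+ k.+1.
Proof.
elim: k => [|k IH]; first by rewrite expr1.
by rewrite [RHS]exprS -IH mulr_sum.
Qed.

Lemma rmorph_ntensf (S T : pzRingType) (g : {rmorphism S -> T}) n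
    (f : 'I_n -> S) k x :
  g (ntensf f k x) = ntensf (g \o f) k x.
Proof. by elim: k x => [|k IH] x //=; rewrite rmorphM IH. Qed.

Lemma ntensmx_diag (S : pzRingType) n (A : 'M[S]_n) (f : 'I_n -> S) k x :
  (forall i, A i i = f i) -> ntensmx A k.+1 x x = ntensf f k x.
Proof. by move=> Af; elim: k x => [|k IH] x //; rewrite ntensmxSS mxE Af IH. Qed.

Lemma ntensf_ge0 (S : numDomainType) n (f : 'I_n -> S) k x :
  (forall i, 0 <= f i) -> 0 <= ntensf f k x.
Proof. by move=> f0; elim: k x => [|k IH] x //=; rewrite mulr_ge0. Qed.

Lemma renyi_overlap_ntensf (R : realType) (a : R) n (p q : 'I_n -> R) k :
  (forall i, 0 <= p i) -> (forall i, 0 <= q i) ->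
  renyi_overlap a (ntensf p k) (ntensf q k) = renyi_overlap a p q ^+ k.+1.
Proof.
move=> p0 q0; rewrite /renyi_overlap -sum_ntensf; apply: eq_bigr => x _.
elim: k x => [|k IH] x //=.
by rewrite !powRM ?ntensf_ge0 // mulrACA IH.
Qed.

Section TensorPowerMatrix.

Lemma tensmx11 (S : pzRingType) m n :
  (1%:M : 'M[S]_m) *t (1%:M : 'M[S]_n) = 1%:M.
Proof.
apply/matrixP=> x y.
case: (mxtens_indexP x) => i j; case: (mxtens_indexP y) => k l.
rewrite tensmxE !mxE (inj_eq (can_inj (@mxtens_indexK m n))) xpair_eqE.
by case: (i == k); case: (j == l); rewrite /= ?mulr1 ?mulr0 ?mul0r.
Qed.

Lemma mxtrace_tens (S : pzRingType) m n (A : 'M[S]_m) (B : 'M[S]_n) :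
  \tr (A *t B) = \tr A * \tr B.
Proof. by rewrite /mxtrace mulr_sum; apply: eq_bigr => x _; rewrite !mxE. Qed.

Lemma mxtrace_ntens (S : pzRingType) n (A : 'M[S]_n) k :
  \tr (ntensmx A k) = \tr A ^+ k.
Proof.
case: k => [|k]; first by rewrite ntensmx0 mxtrace1 expr0.
elim: k => [|k IH]; first by rewrite expr1 ntensmx1.
by rewrite ntensmxSS mxtrace_tens IH [RHS]exprS.
Qed.

Lemma ntensmx_mul (S : comPzRingType) m n p (A : 'M[S]_(m, n)) (B : 'M[S]_(n, p)) k :
  ntensmx A k *m ntensmx B k = ntensmx (A *m B) k.
Proof.
case: k => [|k]; first by rewrite !ntensmx0 mulmx1.
by elim: k => [|k IH] //; rewrite !ntensmxSS tensmx_mul IH.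
Qed.

Lemma ntens1mx (S : pzRingType) n k : ntensmx (1%:M : 'M[S]_n) k = 1%:M.
Proof.
case: k => [|k] //; elim: k => [|k IH] //.
by rewrite ntensmxSS IH tensmx11.
Qed.

Local Open Scope sesquilinear_scope.

Lemma ntensmx_trC (C : numClosedFieldType) m n (A : 'M[C]_(m, n)) k :
  (ntensmx A k)^t* = ntensmx (A^t*) k.
Proof.
case: k => [|k]; first by rewrite !ntensmx0 trmx1 map_mx1.
by elim: k => [|k IH] //; rewrite !ntensmxSS trmx_tens map_mxT IH.
Qed.

Lemma ntensmx_unitary (C : numClosedFieldType) m n (U : 'M[C]_(m, n)) k :
  U \is unitarymx -> ntensmx U k \is unitarymx.
Proof.
by move=> /unitarymxP Uu; apply/unitarymxP; rewrite ntensmx_trC ntensmx_mul Uu ntens1mx.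
Qed.

End TensorPowerMatrix.

Section UnitaryConjugation.
Variable C : numClosedFieldType.
Local Open Scope sesquilinear_scope.

Lemma trmxC_mul m n p (A : 'M[C]_(m, n)) (B : 'M[C]_(n, p)) :
  (A *m B)^t* = B^t* *m A^t*.
Proof. by rewrite trmx_mul map_mxM. Qed.

Lemma unitarymx_trC_mul n (U : 'M[C]_n) : U \is unitarymx -> U^t* *m U = 1%:M.
Proof. by rewrite -trmxC_unitary => /unitarymxP; rewrite trmxCK. Qed.

Lemma mxtrace_unitary_conj n (U X : 'M[C]_n) :
  U \is unitarymx -> \tr (U *m X *m U^t*) = \tr X.
Proof. by move=> Uu; rewrite mxtrace_mulC mulmxA unitarymx_trC_mul // mul1mx. Qed.

Lemma hermsymmxB n (A B : 'M[C]_n) :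
  A \is hermsymmx -> B \is hermsymmx -> A - B \is hermsymmx.
Proof.
move=> /is_hermitianmxP hA /is_hermitianmxP hB; apply/is_hermitianmxP.
by move: hA hB; rewrite !expr0 !scale1r linearB /= map_mxB => <- <-.
Qed.

Lemma hermsymmx_unitary_diag_neq0 n (A : 'M[C]_n) : A \is hermsymmx -> A != 0 ->
  exists2 U : 'M[C]_n, U \is unitarymx & exists j, (U *m A *m U^t*) j j != 0.
Proof.
move=> Ah A0; set U := spectralmx A; set d := spectral_diag A.
have Uu : U \is unitarymx := spectral_unitarymx A.
have UAU : U *m A *m U^t* = diag_mx d.
  have /orthomx_spectralP -> := hermitian_normalmx Ah.
  by rewrite -/U -/d invmx_unitary // !mulmxA (unitarymxP Uu) mul1mx mulmxtVK.
exists U => //.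
case: (pickP [pred j | d 0 j != 0]) => [j dj|d0].
  by exists j; rewrite UAU mxE eqxx mulr1n.
suff d_eq0 : d = 0.
  case/negP: A0; apply/eqP.
  have -> : A = U^t* *m (U *m A *m U^t*) *m U.
    by rewrite !mulmxA unitarymx_trC_mul // mul1mx mulmxKtV.
  by rewrite UAU d_eq0 linear0 mulmx0 mul0mx.
by apply/rowP => i; rewrite mxE; apply/eqP/negbFE/d0.
Qed.

End UnitaryConjugation.

Section Tests.
Variable R : realType.
Local Notation C := R[i].
Local Open Scope sesquilinear_scope.

Lemma psdmx_conj_diag m n (U : 'M[C]_(m, n)) (d : 'rV[C]_m) :
  (forall i, 0 <= d 0 i) -> psdmx (U^t* *m diag_mx d *m U).
Proof.
move=> d0; have dC : (diag_mx d)^t* = diag_mx d.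
  apply/matrixP => i j; rewrite !mxE.
  case: (i =P j) => [->|/eqP ij]; first by rewrite eqxx !mulr1n geC0_conj.
  by rewrite eq_sym (negbTE ij) !mulr0n conjC0.
split.
  apply/is_hermitianmxP; rewrite expr0 scale1r.
  by rewrite !trmxC_mul trmxCK dC mulmxA.
move=> v; rewrite map_trmx.
have -> : v *m (U^t* *m diag_mx d *m U) *m v^t*
    = v *m U^t* *m diag_mx d *m (v *m U^t*)^t*.
  by rewrite trmxC_mul trmxCK !mulmxA.
rewrite mul_mx_diag !mxE; apply: sumr_ge0 => j _; rewrite !mxE mulrAC.
by rewrite mulr_ge0 // mul_conjC_ge0.
Qed.

Lemma psdmx_conj_diag_ge0 m n (U : 'M[C]_(m, n)) X i :
  psdmx X -> 0 <= (U *m X *m U^t*) i i.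
Proof.
case=> _ /(_ (row i U)); rewrite -row_mul map_trmx !mxE.
by congr (0 <= _); apply: eq_bigr => j _; rewrite !mxE.
Qed.

Definition basis_proj n (V : 'M[C]_n) (b : pred 'I_n) : 'M[C]_n :=
  V^t* *m diag_mx (\row_i (b i)%:R) *m V.

Lemma basis_projC n (V : 'M[C]_n) b :
  V \is unitarymx -> 1%:M - basis_proj V b = basis_proj V (predC b).
Proof.
move=> Vu; apply/eqP; rewrite subr_eq -{1}(unitarymx_trC_mul Vu) /basis_proj.
rewrite -mulmxDl -mulmxDr -linearD /=.
have -> : \row_i ((predC b i)%:R : C) + \row_i (b i)%:R = const_mx 1.
  by apply/rowP => i; rewrite !mxE /=; case: (b i); rewrite ?addr0 ?add0r.
by rewrite diag_const_mx mulmx1.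
Qed.

Lemma basis_proj_test n (V : 'M[C]_n) b : V \is unitarymx -> is_test (basis_proj V b).
Proof.
have row_ge0 (c : pred 'I_n) i : 0 <= (\row_j (c j)%:R : 'rV[C]_n) 0 i.
  by rewrite mxE ler0n.
by move=> Vu; split; rewrite ?basis_projC //; apply: psdmx_conj_diag.
Qed.

Lemma mxtrace_mul_basis_proj n (V X : 'M[C]_n) b :
  \tr (X *m basis_proj V b) = \sum_(i | b i) (V *m X *m V^t*) i i.
Proof.
rewrite /basis_proj !mulmxA mxtrace_mulC !mulmxA mul_mx_diag /mxtrace [RHS]big_mkcond.
by apply: eq_bigr => i _; rewrite !mxE; case: (b i); rewrite ?mulr1 ?mulr0.
Qed.

Definition basis_distr n (V X : 'M[C]_n) (i : 'I_n) : R :=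
  complex.Re ((V *m X *m V^t*) i i).

Lemma test_channel_basis_proj n (V X : 'M[C]_n) b :
  V \is unitarymx -> test_channel (basis_proj V b) X = coarse_grain b (basis_distr V X).
Proof.
move=> Vu; apply/funext => -[]; rewrite /test_channel ?basis_projC //;
  rewrite mxtrace_mul_basis_proj raddf_sum; apply: eq_big => i //=;
  by rewrite ?eqb_id ?eqbF_neg.
Qed.

Section BasisDistribution.
Variables (n : nat) (V X : 'M[C]_n).
Hypothesis X_psd : psdmx X.

Lemma basis_distrE i : (V *m X *m V^t*) i i = real_complex R (basis_distr V X i).
Proof.
rewrite /basis_distr; have := psdmx_conj_diag_ge0 V i X_psd.
by case: (_ i i) => x y; rewrite lecE /= => /andP[/eqP ->].
Qed.

Lemma basis_distr_ge0 i : 0 <= basis_distr V X i.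
Proof. by have := psdmx_conj_diag_ge0 V i X_psd; rewrite lecE => /andP[]. Qed.

Lemma sum_basis_distr : V \is unitarymx -> \sum_i basis_distr V X i = complex.Re (\tr X).
Proof. by move=> Vu; rewrite -raddf_sum -/(mxtrace _) mxtrace_unitary_conj. Qed.

Lemma basis_distr_ntens k :
  basis_distr (ntensmx V k.+1) (ntensmx X k.+1) = ntensf (basis_distr V X) k.
Proof.
apply/funext => x; rewrite /basis_distr ntensmx_trC !ntensmx_mul.
by rewrite (ntensmx_diag _ basis_distrE) -rmorph_ntensf.
Qed.

End BasisDistribution.

End Tests.

Section TestDivergence.
Variable R : realType.
Local Notation C := R[i].
Local Open Scope sesquilinear_scope.

Lemma is_test0 n : is_test (0 : 'M[C]_n).
Proof.
have psd_diag (d : 'rV[C]_n) : (forall i, 0 <= d 0 i) -> psdmx (diag_mx d).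
  by move=> d0; have := psdmx_conj_diag 1%:M d0; rewrite trmx1 map_mx1 mul1mx mulmx1.
split; first by have := psd_diag 0; rewrite linear0; apply=> i; rewrite mxE.
have := psd_diag (const_mx 1); rewrite diag_const_mx subr0.
by apply=> i; rewrite mxE ler01.
Qed.

Lemma D_test_ge0 a n (X Y : 'M[C]_n) : 0 < a < 1 ->
  complex.Re (\tr X) = 1 -> complex.Re (\tr Y) = 1 -> (0 <= D_test a X Y)%E.
Proof.
move=> /andP[a0 a1] X1 Y1; apply: ereal_sup_ubound; exists 0; first exact: is_test0.
rewrite renyi_divE /renyi_overlap big_bool /test_channel !mulmx0 mxtrace0 raddf0.
rewrite /= subr0 !mulmx1 X1 Y1 powR0 ?gt_eqF // mul0r add0r powR1 /= mulr1.
by rewrite renyi_of_overlap1.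
Qed.

Lemma D_test_self a n (X : 'M[C]_n) : 0 < a < 1 ->
  complex.Re (\tr X) = 1 -> D_test a X X = 0%E.
Proof.
move=> a01 X1; apply/le_anti; rewrite D_test_ge0 // andbT.
apply: ge_ereal_sup => _ [T _ <-]; rewrite renyi_divE -(renyi_of_overlap1 a).
apply: renyi_of_overlap_le; first by case/andP: a01.
rewrite ler01 renyi_overlap_self_ge1 // big_bool /= /test_channel -raddfD -mxtraceD.
by rewrite -mulmxDr addrC subrK mulmx1; exact: X1.
Qed.

Lemma D_test_ntens_ge a n (U rho sigma : 'M[C]_n) k : 0 < a < 1 ->
  U \is unitarymx -> density rho -> density sigma -> (0 < k)%N ->
  (renyi_of_overlap a (2 * (renyi_overlap a (basis_distr U rho) (basis_distr U sigma)
                             `^ Num.min a (1 - a)) ^+ k)%R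
    <= D_test a (ntensmx rho k) (ntensmx sigma k))%E.
Proof.
move=> a01 Uu [rho_psd rho1] [sigma_psd sigma1]; case: k => // k _.
set p := basis_distr U rho; set q := basis_distr U sigma.
have p0 := basis_distr_ge0 U rho_psd; have q0 := basis_distr_ge0 U sigma_psd.
have p1 : \sum_i p i = 1 by rewrite sum_basis_distr // rho1.
have q1 : \sum_i q i = 1 by rewrite sum_basis_distr // sigma1.
set b := [pred x | ntensf q k x <= ntensf p k x].
set T := basis_proj (ntensmx U k.+1) b.
apply: (@le_trans _ _ (renyi_div a (test_channel T (ntensmx rho k.+1))
                                   (test_channel T (ntensmx sigma k.+1)))); last first.
  by apply: ereal_sup_ubound; exists T => //; exact/basis_proj_test/ntensmx_unitary.
rewrite renyi_divE !test_channel_basis_proj ?ntensmx_unitary // !basis_distr_ntens //.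
apply: renyi_of_overlap_le; first by case/andP: a01.
rewrite renyi_overlap_ge0 /= -powR_exprn ?renyi_overlap_ge0 // -renyi_overlap_ntensf //.
apply: renyi_overlap_threshold_le; rewrite ?sum_ntensf ?p1 ?q1 ?expr1n //;
  by move=> x; apply: ntensf_ge0.
Qed.

Lemma D_test_ntens_linear a n (rho sigma : 'M[C]_n) : 0 < a < 1 ->
  density rho -> density sigma -> rho != sigma ->
  exists2 c : R, 0 < c & \forall k \near \oo,
    (c%:E <= (k%:R^-1)%:E * D_test a (ntensmx rho k) (ntensmx sigma k))%E.
Proof.
move=> a01 drho dsigma neq; have /andP[a0 a1] := a01.
have [[rho_psd rho1] [sigma_psd sigma1]] := (drho, dsigma).
have [U Uu [j Uj]] : exists2 U : 'M[C]_n, U \is unitarymx &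
    exists j, (U *m (rho - sigma) *m U^t*) j j != 0.
  apply: hermsymmx_unitary_diag_neq0; rewrite ?subr_eq0 //.
  exact: hermsymmxB (proj1 rho_psd) (proj1 sigma_psd).
set p := basis_distr U rho; set q := basis_distr U sigma.
have p1 : \sum_i p i = 1 by rewrite sum_basis_distr // rho1.
have q1 : \sum_i q i = 1 by rewrite sum_basis_distr // sigma1.
have pq : p j != q j.
  apply: contra Uj => /eqP pq.
  have entryB (A B : 'M[C]_n) : (A - B) j j = A j j - B j j by rewrite !mxE.
  by rewrite mulmxBr mulmxBl entryB !basis_distrE // -/p -/q pq subrr.
set F := renyi_overlap a p q.
have F01 : 0 <= F < 1.
  by rewrite renyi_overlap_ge0 (renyi_overlap_lt1 (basis_distr_ge0 U rho_psd)
    (basis_distr_ge0 U sigma_psd) p1 q1 a01 pq).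
have [c c0 Hc] := @renyi_of_overlap_geometric _ a (F `^ Num.min a (1 - a)) a01
  ltac:(by rewrite powR_ge0 powR_lt1 // lt_min a0 subr_gt0).
exists c => //; near=> k.
have k0 : (0 < k)%N by near: k; exact: nbhs_infty_gt.
have ck : ((c * k%:R)%:E <= D_test a (ntensmx rho k) (ntensmx sigma k))%E.
  by apply: le_trans (D_test_ntens_ge a01 Uu drho dsigma k0); near: k.
apply: le_trans (lee_wpmul2l _ ck); last by rewrite lee_fin invr_ge0.
by rewrite -EFinM mulrCA mulVf ?mulr1 // pnatr_eq0 -lt0n.
Unshelve. all: by end_near. Qed.

End TestDivergence.

Section LimSup.
Variable R : realType.
Local Open Scope ereal_scope.

Lemma limn_esup_ge_near (u : (\bar R)^nat) (c : \bar R) :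
  (\forall k \near \oo, c <= u k) -> c <= limn_esup u.
Proof.
move=> cu; rewrite limn_esup_lim; apply: lime_ge; first exact: is_cvg_esups.
near=> m; apply: (@le_trans _ _ (u m)); first by near: m.
by apply: ereal_sup_ubound; exists m => /=.
Unshelve. all: by end_near. Qed.

Lemma limn_esup_le (u : (\bar R)^nat) (c : \bar R) :
  (forall k, u k <= c) -> limn_esup u <= c.
Proof.
move=> uc; rewrite limn_esup_lim; apply: lime_le; first exact: is_cvg_esups.
by apply: nearW => m; apply: ge_ereal_sup => _ [k _ <-].
Qed.

End LimSup.

Theorem mainTheorem11 (R : realType) (alpha : R) (n : nat)
  (rho sigma : 'M[R[i]]_n) :
  0 < alpha < 1 -> density rho -> density sigma ->
  (0 <= D_test_bar alpha rho sigma)%E /\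
  (D_test_bar alpha rho sigma = 0%E <-> rho = sigma).
Proof.
move=> a01 drho dsigma.
have tr1 (X : 'M[R[i]]_n) k : density X -> complex.Re (\tr (ntensmx X k)) = 1.
  by case=> _ X1; rewrite mxtrace_ntens X1 expr1n.
have D_ge0 (X Y : 'M[R[i]]_n) : density X -> density Y -> (0 <= D_test_bar alpha X Y)%E.
  move=> dX dY; apply: limn_esup_ge_near; apply: nearW => k.
  by rewrite mule_ge0 ?lee_fin ?invr_ge0 ?D_test_ge0 ?tr1.
split; first exact: D_ge0.
split=> [D0|<-].
  apply/eqP; apply: contraT => neq.
  have [c c0 Hc] := D_test_ntens_linear a01 drho dsigma neq.
  have : (c%:E <= D_test_bar alpha rho sigma)%E := limn_esup_ge_near Hc.
  by rewrite D0 lee_fin leNgt c0.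
apply/le_anti; rewrite D_ge0 // andbT; apply: limn_esup_le => k.
by rewrite D_test_self ?mule0 ?tr1.
Qed.
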